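(* Let $v_1,v_2,v_3$ be positive integers with $\gcd(v_1,v_2,v_3)=1$, and suppose that no two of these speeds have a common factor greater than $2$ (i.e. $\gcd(v_i,v_j)\le 2$ for $i\ne j$). Let $r=\left\lfloor\frac{v_1+v_2}{3}\right\rfloor$, and let $L=\max_{m\in\mathbb{Z}}\min_{1\le i\le 3}\left\Vert \frac{m}{v_1+v_2}v_i\right\Vert$ be the maximum loneliness achieved at a time of the form $t=\frac{m}{v_1+v_2}$ with $m\in\mathbb{Z}$. Then: if $v_3$ is a multiple of $v_1+v_2$, then $L=0$; and if $v_3$ is not a multiple of $v_1+v_2$, then $L\ge\frac{r}{v_1+v_2}$.
   Context: For a real number $x$, $\Vert x\Vert$ denotes the distance from $x$ to the nearest integer. *)

From mathcomp Require Import all_boot all_order all_algebra.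
Set Implicit Arguments. Unset Strict Implicit. Unset Printing Implicit Defensive.
Import Order.TTheory GRing.Theory Num.Theory.
Local Open Scope ring_scope.

Definition dist_nearest_int (x : rat) : rat :=
  Num.min (x - (Num.floor x)%:~R) ((Num.floor x + 1)%:~R - x).

Definition loneliness_at (v1 v2 v3 : nat) (m : int) : rat :=
  let N : rat := (v1 + v2)%:R in
  Num.min (dist_nearest_int (m%:~R * v1%:R / N))
    (Num.min (dist_nearest_int (m%:~R * v2%:R / N))
             (dist_nearest_int (m%:~R * v3%:R / N))).

Definition is_max_loneliness (v1 v2 v3 : nat) (L : rat) : Prop :=
  (exists m : int, loneliness_at v1 v2 v3 m = L) /\
  (forall m : int, loneliness_at v1 v2 v3 m <= L).

From mathcomp Require Import all_boot all_order all_algebra.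
From mathcomp Require Import zify ring.
From Stdlib Require Import Classical.
Set Implicit Arguments. Unset Strict Implicit. Unset Printing Implicit Defensive.
Import Order.TTheory GRing.Theory Num.Theory.

(* Write N = v1 + v2 and r = N %/ 3.  Since m v1 + m v2 = m N, the first two
   runners are always at opposite points, and ||m v / N|| >= r / N as soon as
   m v mod N lies in [r, N - r]; so it suffices to find m putting m v1 and m v3
   there.
   If gcd(v1, v2) = 1, take m = k u with u v1 = -1 (mod N): this asks for k in
   [r, N - r] with k c mod N also there, where c = u v3 mod N is nonzero.  If
   there were none, the multiples k c, k in [r, N - r], would all lie within r
   of a multiple of N, i.e. form a walk with steps c or c - N in a window of
   width 2r - 2, and comparing total displacement with the width rules this out.
   If gcd(v1, v2) = 2, then v3 is odd and N = 2M; replacing m by m + M shifts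
   m v3 by M modulo N without moving m v1, and the same kind of walk argument
   modulo M applies.
   If N divides v3, the third runner is at the origin at every time m / N. *)

Definition in_mid_third (N x : nat) : bool := N %/ 3 <= x %% N <= N - N %/ 3.

Lemma telescope_nat (f : nat -> nat) (A B n : nat) :
  (forall j, j < n -> f j.+1 + A = f j + B) -> f n + n * A = f 0 + n * B.
Proof.
elim: n => [|n IHn] step; first by rewrite !mul0n.
have := step n (ltnSn n); have := IHn (fun j lt_jn => step j (ltnW lt_jn)).
rewrite !mulSn; lia.
Qed.

Lemma walk_in_window (y : nat -> nat) (P s lo w n : nat) :
  (forall j, j <= n -> lo <= y j <= lo + w) ->
  (forall j, j < n -> y j.+1 = y j + s \/ y j.+1 + P = y j + s) ->
  (w < s -> n * (P - s) <= w) /\ (w < P - s -> n * s <= w).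
Proof.
move=> y_in y_step; split=> long_step.
  have down j : j < n -> y j.+1 + P = y j + s.
    move=> lt_jn; have := y_in j (ltnW lt_jn); have := y_in j.+1 lt_jn.
    have := y_step j lt_jn; lia.
  have := telescope_nat down; have := y_in 0 isT; have := y_in n (leqnn n).
  rewrite mulnBr; lia.
have up j : j < n -> y j.+1 + 0 = y j + s.
  move=> lt_jn; have := y_in j (ltnW lt_jn); have := y_in j.+1 lt_jn.
  have := y_step j lt_jn; lia.
have := telescope_nat up; have := y_in 0 isT; have := y_in n (leqnn n); lia.
Qed.

Lemma modnD_cases (x c N : nat) : c < N ->
  (x + c) %% N = x %% N + c \/ (x + c) %% N + N = x %% N + c.
Proof.
move=> lt_cN; have N_gt0 : 0 < N by lia.
rewrite modnD // (modn_small lt_cN); have := ltn_pmod x N_gt0.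
by case: (leqP N (x %% N + c)); [right|left]; lia.
Qed.

Lemma mid_third_small (N k : nat) : N %/ 3 <= k <= N - N %/ 3 -> in_mid_third N k.
Proof.
move=> k_mid; rewrite /in_mid_third.
case: (ltnP k N) => [lt_kN|le_Nk]; first by rewrite modn_small.
have -> : k = N by lia.
rewrite modnn; lia.
Qed.

Lemma mid_third_opp (N x y : nat) : N %| x + y -> in_mid_third N x -> in_mid_third N y.
Proof.
case: (posnP N) => [->|N_gt0]; first by rewrite dvd0n /in_mid_third !modn0; lia.
rewrite /dvdn -modnDm /in_mid_third.
have := ltn_pmod x N_gt0; have := ltn_pmod y N_gt0.
move: (x %% N) (y %% N) => a b lt_aN lt_bN.
case: (ltnP (a + b) N) => [lt_abN|le_Nab]; first by rewrite modn_small //; lia.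
have -> : a + b = (a + b - N) + N by lia.
rewrite modnDr modn_small; lia.
Qed.

(* For x within N %/ 3 of a multiple of N, the representative of x mod N in
   the window (N - N %/ 3, N + N %/ 3), which does not wrap around. *)
Definition lift_near0 (N x : nat) : nat :=
  if x %% N < N %/ 3 then x %% N + N else x %% N.

Lemma lift_near0_bounds (N x : nat) : 0 < N -> ~~ in_mid_third N x ->
  N - N %/ 3 < lift_near0 N x < N + N %/ 3.
Proof.
rewrite /in_mid_third /lift_near0 => N_gt0.
have := ltn_pmod x N_gt0; case: ifP; lia.
Qed.

Lemma lift_near0_step (N x c : nat) : c < N ->
  ~~ in_mid_third N x -> ~~ in_mid_third N (x + c) ->
  lift_near0 N (x + c) = lift_near0 N x + c \/
  lift_near0 N (x + c) + N = lift_near0 N x + c.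
Proof.
move=> lt_cN; have N_gt0 : 0 < N by lia.
have := @lift_near0_bounds N x N_gt0; have := @lift_near0_bounds N (x + c) N_gt0.
rewrite /in_mid_third /lift_near0.
have := modnD_cases x lt_cN; have := ltn_pmod x N_gt0; have := ltn_pmod (x + c) N_gt0.
case: ifP; case: ifP; lia.
Qed.

Lemma mid_third_mul_half (N c : nat) : 0 < c -> c.*2 = N ->
  exists2 k, N %/ 3 <= k <= N - N %/ 3 & in_mid_third N (k * c).
Proof.
move=> c_gt0 def_N; pose k := if odd (N %/ 3) then N %/ 3 else (N %/ 3).+1.
have odd_k : odd k by rewrite /k; case: ifP => //= ->.
exists k; first by rewrite /k; case: ifP; lia.
have -> : k * c = k./2 * N + c.
  by rewrite -def_N -{1}(odd_double_half k) odd_k -!muln2; lia.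
rewrite /in_mid_third modnMDl modn_small; lia.
Qed.

Lemma mid_third_mul_large (N c : nat) : (N %/ 3).*2 <= c.+1 -> c < N ->
  exists2 k, N %/ 3 <= k <= N - N %/ 3 & in_mid_third N (k * c).
Proof.
set r := N %/ 3 => le_2r_c1 lt_cN.
have N_gt0 : 0 < N by lia.
have [r0|r_gt0] := posnP r; first by exists 0; rewrite ?r0 // /in_mid_third mod0n; lia.
apply: NNPP => nogood.
have bad k : r <= k <= N - r -> ~~ in_mid_third N (k * c).
  by move=> k_mid; apply/negP => kc_mid; apply: nogood; exists k.
pose Y k := lift_near0 N (k * c).
have Y_window j : j <= N - r.*2 -> (N - r).+1 <= Y (r + j) <= (N - r).+1 + (r.*2 - 2).
  by move=> le_j; have := lift_near0_bounds N_gt0 (bad (r + j) ltac:(lia)); rewrite /Y; lia.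
have Y_step j : j < N - r.*2 ->
    Y (r + j.+1) = Y (r + j) + c \/ Y (r + j.+1) + N = Y (r + j) + c.
  move=> lt_j; rewrite /Y addnS mulSnr.
  by apply: lift_near0_step => //; rewrite -?mulSnr; apply: bad; lia.
(* An up-step by c > 2r - 2 would leave the window, so all N - 2r >= r steps
   go down by N - c, which forces N - c = 1. *)
have [walk_down _] := walk_in_window (y := fun j => Y (r + j)) Y_window Y_step.
have def_c : c = N - 1 by have := walk_down ltac:(lia); nia.
have : in_mid_third N (r * c).
  have -> : r * c = (r - 1) * N + (N - r) by rewrite def_c; nia.
  by rewrite /in_mid_third modnMDl modn_small; lia.
by apply/negP/bad; lia.
Qed.

Lemma mid_third_mul_middle (N c : nat) : N < c.*2 -> c.+2 <= (N %/ 3).*2 ->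
  exists2 k, N %/ 3 <= k <= N - N %/ 3 & in_mid_third N (k * c).
Proof.
set r := N %/ 3 => lt_N_2c le_c2_2r.
have r_bounds : 3 * r <= N < 3 * r + 3 by rewrite /r; lia.
have lt_cN : c < N by lia.
have N_gt0 : 0 < N by lia.
apply: NNPP => nogood.
have bad k : r <= k <= N - r -> ~~ in_mid_third N (k * c).
  by move=> k_mid; apply/negP => kc_mid; apply: nogood; exists k.
pose Y k := lift_near0 N (k * c).
have Y_in k : r <= k <= N - r -> N - r < Y k < N + r.
  by move=> k_mid; apply: lift_near0_bounds; last exact: bad.
have Y_step k : r <= k -> k < N - r -> Y k.+1 = Y k + c \/ Y k.+1 + N = Y k + c.
  move=> le_rk lt_k; rewrite /Y mulSnr.
  by apply: lift_near0_step => //; rewrite -?mulSnr; apply: bad; lia.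
(* Both c and N - c exceed half the window width 2r - 2, so up- and down-steps
   alternate and every double step moves the lift by 2c - N >= 1. *)
have Y_step2 k : r <= k -> k.+2 <= N - r -> Y k.+2 + N = Y k + c.*2.
  move=> le_rk le_k2; have := Y_step k le_rk (ltnW le_k2).
  have := Y_step k.+1 (leqW le_rk) le_k2.
  have := Y_in k; have := Y_in k.+1; have := Y_in k.+2; lia.
have [p p_r Y_up] : exists2 p, r <= p <= r.+1 & Y p.+1 = Y p + c.
  have lt_r1 : r.+1 < N - r by lia.
  case: (Y_step r (leqnn r) (ltnW lt_r1)) => [up|down]; first by exists r => //; lia.
  case: (Y_step r.+1 (leqnSn r) lt_r1) => [up|down']; first by exists r.+1 => //; lia.
  have := Y_in r; have := Y_in r.+1; have := Y_in r.+2; lia.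
set J := (N - r.*2 - 2)./2.
have J_bounds : N - r.*2 - 3 <= J.*2 <= N - r.*2 - 2.
  by have := odd_double_half (N - r.*2 - 2); rewrite -/J; case: odd => /=; lia.
have walk : Y (p.+1 + J.*2) + J * N = Y p.+1 + J * c.*2.
  have := @telescope_nat (fun j => Y (p.+1 + j.*2)) N c.*2 J; rewrite /= double0 addn0.
  by apply=> j lt_jJ; rewrite doubleS !addnS; apply: Y_step2; lia.
(* Starting with the up-step at p, J double steps lift Y by at least c + J,
   more than the window allows. *)
have := Y_in p; have := Y_in (p.+1 + J.*2).
have : J * N + J <= J * c.*2 by rewrite addnC -mulnS leq_mul2l lt_N_2c orbT.
lia.
Qed.

Lemma mid_third_mul (N c : nat) : 0 < c < N ->
  exists2 k, N %/ 3 <= k <= N - N %/ 3 & in_mid_third N (k * c).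
Proof.
move=> /andP[c_gt0 lt_cN].
wlog le_N_2c : c c_gt0 lt_cN / N <= c.*2.
  move=> oriented; case: (leqP N c.*2) => [|lt_2c_N]; first exact: oriented.
  have [k k_mid kc_mid] := oriented (N - c) ltac:(lia) ltac:(lia) ltac:(lia).
  exists k => //; apply: mid_third_opp kc_mid.
  by rewrite -mulnDr subnK ?dvdn_mull // ltnW.
case: (ltngtP N c.*2) le_N_2c => // [lt_N_2c _ | def_N _]; last exact: mid_third_mul_half.
case: (leqP c.+2 (N %/ 3).*2) => [le_c2_2r | lt_2r_c2].
  exact: mid_third_mul_middle.
by apply: mid_third_mul_large => //; lia.
Qed.

Lemma mul_mod_off_middle (M w : nat) : 0 < M ->
  exists2 k, M.*2 %/ 3 <= k.*2 <= M.*2 - M.*2 %/ 3 &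
    (k * w %% M <= M - M.*2 %/ 3) || (M.*2 %/ 3 <= k * w %% M).
Proof.
move=> M_gt0; set r := M.*2 %/ 3.
have r_bounds : 3 * r <= M.*2 < 3 * r + 3 by rewrite /r; lia.
apply: NNPP => nogood.
have bad k : r <= k.*2 <= M.*2 - r -> M - r < k * w %% M < r.
  by move=> k_mid; apply: NNPP => off; apply: nogood; exists k => //; lia.
set k0 := r.+1 %/ 2; set n := (M.*2 - r) %/ 2 - k0.
have k_bounds : [/\ r <= k0.*2, (k0 + n).*2 <= M.*2 - r & M - r - 1 <= n].
  by rewrite /n /k0; split; lia.
case: k_bounds => le_r_2k0 le_2kn le_n.
have wide : M.+2 <= r.*2 by have := bad k0 ltac:(lia); lia.
pose y j := (k0 + j) * w %% M.
have y_in j : j <= n -> (M - r).+1 <= y j <= (M - r).+1 + (r.*2 - M - 2).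
  by move=> le_jn; rewrite /y; have := bad (k0 + j) ltac:(lia); lia.
have y_step j : j < n -> y j.+1 = y j + w %% M \/ y j.+1 + M = y j + w %% M.
  by move=> lt_jn; rewrite /y addnS mulSnr -modnDmr; apply: modnD_cases; apply: ltn_pmod.
(* The window (M - r, r) is narrower than the number n of steps, so n steps of
   one kind and of nonzero length cannot fit in it. *)
have [long_down short_up] := walk_in_window y_in y_step.
case: (leqP (w %% M) (r.*2 - M - 2)) => [short | long].
  have [w0 | w_gt0] := posnP (w %% M).
    by have := bad k0; rewrite -modnMmr w0 muln0 mod0n; lia.
  have := short_up ltac:(lia); have : n <= n * (w %% M) by rewrite leq_pmulr.
  lia.
have := long_down long; have : n <= n * (M - w %% M) by rewrite leq_pmulr // subn_gt0 ltn_pmod.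
lia.
Qed.

Lemma mid_third_coprime (N a v : nat) : 0 < N -> coprime a N -> ~~ (N %| v) ->
  exists m, in_mid_third N (m * a) && in_mid_third N (m * v).
Proof.
move=> N_gt0 co_aN ndvd_v.
have [u _] := Bezoutl a N_gt0; rewrite gcdnC (eqP co_aN) => inv_u.
have c_gt0 : 0 < u * v %% N.
  rewrite lt0n; apply: contra ndvd_v => /eqP uv0.
  have : N %| v + u * v * a by rewrite mulnAC -mulSn dvdn_mulr // -add1n.
  by rewrite dvdn_addl // dvdn_mulr //; apply/eqP.
have c_range : 0 < u * v %% N < N by rewrite c_gt0 ltn_pmod.
have [k k_mid kc_mid] := mid_third_mul c_range.
exists (k * u); apply/andP; split.
  apply: mid_third_opp (mid_third_small k_mid).
  by rewrite -mulnA -mulnS dvdn_mull // -add1n.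
by rewrite /in_mid_third -mulnA -modnMmr.
Qed.

Lemma mid_third_double (M x : nat) : 0 < M ->
  (x %% M <= M - M.*2 %/ 3) || (M.*2 %/ 3 <= x %% M) ->
  in_mid_third M.*2 x || in_mid_third M.*2 (x + M).
Proof.
move=> M_gt0 off.
have := ltn_pmod x (_ : 0 < M.*2); rewrite double_gt0 => /(_ M_gt0) lt_y.
have def_t : x %% M = x %% M.*2 %% M by rewrite modn_dvdm // -mul2n dvdn_mull.
rewrite /in_mid_third -modnDml; move: off; rewrite def_t.
move: (x %% M.*2) lt_y => y lt_y.
have [lt_yM|le_My] := ltnP y M; first by rewrite !modn_small; lia.
have -> : y = (y - M) + M by lia.
by rewrite modnDr -addnA addnn modnDr !modn_small; lia.
Qed.

Lemma mid_third_even (M a v : nat) : 0 < M -> coprime a M -> odd v ->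
  exists m, in_mid_third M.*2 (m * a.*2) && in_mid_third M.*2 (m * v).
Proof.
move=> M_gt0 co_aM odd_v.
have [u _] := Bezoutl a M_gt0; rewrite gcdnC (eqP co_aM) => inv_u.
have [k k_mid kw_off] := mul_mod_off_middle (u * v) M_gt0.
have [e kw_mid] : exists e : bool, in_mid_third M.*2 (k * (u * v) + e * M).
  case/orP: (mid_third_double M_gt0 kw_off) => [kw_mid | kwM_mid].
    by exists false; rewrite addn0.
  by exists true; rewrite mul1n.
exists (k * u + e * M); apply/andP; split.
  apply: mid_third_opp (mid_third_small k_mid).
  have -> : k.*2 + (k * u + e * M) * a.*2 = (k * (1 + u * a)).*2 + (e * a) * M.*2.
    by rewrite -!muln2; lia.
  rewrite dvdn_addl ?dvdn_mull // -!muln2 dvdn_pmul2r //.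
  exact: dvdn_mull.
have -> : (k * u + e * M) * v = (e * v./2) * M.*2 + (k * (u * v) + e * M).
  by rewrite -{1}(odd_double_half v) odd_v -!muln2; lia.
by rewrite /in_mid_third modnMDl.
Qed.

Lemma mid_third_speeds (v1 v2 v3 : nat) : 0 < v1 -> 0 < v2 ->
  gcdn (gcdn v1 v2) v3 = 1 -> gcdn v1 v2 <= 2 -> ~~ (v1 + v2 %| v3) ->
  exists m, [&& in_mid_third (v1 + v2) (m * v1), in_mid_third (v1 + v2) (m * v2)
              & in_mid_third (v1 + v2) (m * v3)].
Proof.
move=> v1_gt0 v2_gt0 co123 le_g12 ndvd3.
suff [m /andP[mid1 mid3]] :
    exists m, in_mid_third (v1 + v2) (m * v1) && in_mid_third (v1 + v2) (m * v3).
  exists m; rewrite mid1 mid3 andbT /=.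
  by apply: mid_third_opp mid1; rewrite -mulnDr dvdn_mull.
have g12_gt0 : 0 < gcdn v1 v2 by rewrite gcdn_gt0 v1_gt0.
have [g12_1 | g12_2] : gcdn v1 v2 = 1 \/ gcdn v1 v2 = 2 by lia.
  by apply: mid_third_coprime; rewrite ?addn_gt0 ?v1_gt0 // /coprime gcdnDl g12_1.
have [/dvdnP[a def_v1] /dvdnP[b def_v2]] : 2 %| v1 /\ 2 %| v2.
  by rewrite -g12_2 dvdn_gcdl dvdn_gcdr.
have def_N : v1 + v2 = (a + b) * 2 by rewrite def_v1 def_v2 mulnDl.
have co_a : coprime a (a + b).
  have : gcdn a (a + b) * 2 = 1 * 2 by rewrite muln_gcdl -def_N -def_v1 gcdnDl g12_2.
  by move/eqP; rewrite eqn_pmul2r.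
have odd_v3 : odd v3 by rewrite -coprime2n /coprime -g12_2 co123.
rewrite def_N def_v1 !muln2; apply: mid_third_even => //; lia.
Qed.

Local Open Scope ring_scope.

Lemma dist_nearest_int_ge0 (x : rat) : 0 <= dist_nearest_int x.
Proof.
have /andP[fl_le lt_fl1] := floor_itv x.
by rewrite le_min !subr_ge0 fl_le ltW.
Qed.

Lemma dist_nearest_intDz (x : rat) (z : int) :
  dist_nearest_int (x + z%:~R) = dist_nearest_int x.
Proof.
rewrite /dist_nearest_int floorDrz ?intr_int // intrKfloor.
by rewrite !intrD; congr Num.min; ring.
Qed.

Lemma dist_nearest_int_int (z : int) : dist_nearest_int z%:~R = 0.
Proof.
rewrite -[z%:~R]add0r dist_nearest_intDz /dist_nearest_int.
by rewrite (_ : Num.floor 0 = 0) // subrr; apply/min_idPl; rewrite add0r ler01.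
Qed.

Lemma dist_nearest_int_mid_third (N x : nat) : (0 < N)%N -> in_mid_third N x ->
  (N %/ 3)%N%:R / N%:R <= dist_nearest_int (x%:R / N%:R : rat).
Proof.
move=> N_gt0 mid_x.
have N_neq0 : N%:R != 0 :> rat by rewrite pnatr_eq0 -lt0n.
rewrite (divn_eq x N) natrD natrM mulrDl mulfK // addrC.
rewrite (_ : (x %/ N)%N%:R = (x %/ N)%N%:~R) // dist_nearest_intDz.
move: mid_x (ltn_pmod x N_gt0); rewrite /in_mid_third.
move: (x %% N)%N (N %/ 3)%N => t r /andP[le_r_t le_t_Nr] lt_tN.
have fl0 : Num.floor (t%:R / N%:R : rat) = 0.
  apply: floor_def; rewrite add0r mulr0z divr_ge0 //=.
  by rewrite ltr_pdivrMr ?ltr0n // mul1r ltr_nat.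
rewrite /dist_nearest_int fl0 subr0 add0r le_min.
rewrite ler_pM2r ?invr_gt0 ?ltr0n // ler_nat le_r_t /=.
rewrite mulr1z (_ : 1 - _ = (N - t)%N%:R / N%:R); last by rewrite natrB ?mulrBl ?divff // ltnW.
by rewrite ler_pM2r ?invr_gt0 ?ltr0n // ler_nat; lia.
Qed.

Lemma loneliness_at_ge0 (v1 v2 v3 : nat) (m : int) : 0 <= loneliness_at v1 v2 v3 m.
Proof.
by rewrite /loneliness_at le_min [X in _ && X]le_min !dist_nearest_int_ge0.
Qed.

Lemma loneliness_at_modz (v1 v2 v3 : nat) (m : int) : (0 < v1 + v2)%N ->
  loneliness_at v1 v2 v3 (m %% (v1 + v2)%N)%Z = loneliness_at v1 v2 v3 m.
Proof.
move=> N_gt0; have N_neq0 : (v1 + v2)%N%:R != 0 :> rat by rewrite pnatr_eq0 -lt0n.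
have shift (v : nat) : m%:~R * v%:R / (v1 + v2)%N%:R =
    (m %% (v1 + v2)%N)%Z%:~R * v%:R / (v1 + v2)%N%:R + ((m %/ (v1 + v2)%N)%Z * v)%:~R :> rat.
  rewrite {1}(divz_eq m (v1 + v2)%N); move: (m %/ _)%Z (m %% _)%Z => q t.
  by rewrite intrD !intrM -!pmulrn; field; rewrite -natrD.
by rewrite /loneliness_at !shift !dist_nearest_intDz.
Qed.

Lemma loneliness_at_mid_third (v1 v2 v3 m : nat) : (0 < v1 + v2)%N ->
  [&& in_mid_third (v1 + v2) (m * v1), in_mid_third (v1 + v2) (m * v2)
    & in_mid_third (v1 + v2) (m * v3)] ->
  ((v1 + v2) %/ 3)%N%:R / (v1 + v2)%N%:R <= loneliness_at v1 v2 v3 m.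
Proof.
move=> N_gt0 /and3P[mid1 mid2 mid3].
rewrite /loneliness_at -!natrM le_min [X in _ && X]le_min.
by rewrite !dist_nearest_int_mid_third.
Qed.

Lemma exists_max_loneliness (v1 v2 v3 : nat) : (0 < v1 + v2)%N ->
  exists L, is_max_loneliness v1 v2 v3 L.
Proof.
move=> N_gt0; pose F (i : 'I_(v1 + v2)) := loneliness_at v1 v2 v3 i.
have [i _ F_max] := @arg_maxP _ _ _ (Ordinal N_gt0) xpredT F isT.
exists (F i); split=> [|m]; first by exists i.
rewrite -loneliness_at_modz //.
have t_ge0 : (0 <= m %% (v1 + v2)%N)%Z by rewrite modz_ge0 // -lt0n.
have lt_tN : (`|(m %% (v1 + v2)%N)%Z| < v1 + v2)%N by rewrite -ltz_nat gez0_abs // ltz_pmod.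
by rewrite -(gez0_abs t_ge0); apply: (F_max (Ordinal lt_tN)).
Qed.

Theorem lemma7p1 (v1 v2 v3 : nat)
  (h1 : (0 < v1)%N) (h2 : (0 < v2)%N) (h3 : (0 < v3)%N)
  (hg : gcdn (gcdn v1 v2) v3 = 1%N)
  (h12 : (gcdn v1 v2 <= 2)%N) (h13 : (gcdn v1 v3 <= 2)%N)
  (h23 : (gcdn v2 v3 <= 2)%N) :
  (exists L : rat, is_max_loneliness v1 v2 v3 L) /\
  (forall L : rat, is_max_loneliness v1 v2 v3 L ->
     (((v1 + v2) %| v3)%N -> L = 0) /\
     (~~ ((v1 + v2) %| v3)%N ->
        ((v1 + v2) %/ 3)%N%:R / (v1 + v2)%N%:R <= L)).
Proof.
have N_gt0 : (0 < v1 + v2)%N by rewrite addn_gt0 h1.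
split=> [|L [[m0 <-] L_max]]; first exact: exists_max_loneliness.
split=> [/dvdnP[q def_v3] | ndvd3].
  have v3_int : m0%:~R * v3%:R / (v1 + v2)%N%:R = (m0 * q)%:~R :> rat.
    by rewrite def_v3 natrM intrM mulrA mulfK // pnatr_eq0 -lt0n.
  apply/eqP; rewrite eq_le loneliness_at_ge0 andbT.
  by rewrite /loneliness_at v3_int dist_nearest_int_int ge_min [X in _ || X]ge_min lexx !orbT.
have [m mid_m] := mid_third_speeds h1 h2 hg h12 ndvd3.
exact: le_trans (loneliness_at_mid_third N_gt0 mid_m) (L_max m).
Qed.
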